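(* For all $\mu,\nu\in\mathcal P(\mathcal X)$, the operator $\mathrm{Id}-K_{\mu,\nu}K_{\nu,\mu}$ is a well-defined continuous linear bijection of $C(\mathcal X)/\mathbb R$ (invertible on $C(\mathcal X)/\mathbb R$).
   Context: $(\mathcal X,\mathsf d)$ compact metric space; $\varepsilon>0$; $c\in C(\mathcal X\times\mathcal X)$ symmetric, nonnegative, with $\exp(-c/\varepsilon)$ a positive definite universal kernel. Schrödinger potentials: $T_\varepsilon(f,\mu)(y):=-\varepsilon\log\int\exp((f(x)-c(x,y))/\varepsilon)d\mu(x)$; $(f_{\mu,\nu},f_{\nu,\mu})$ the unique continuous pair with $f_{\mu,\nu}=T_\varepsilon(f_{\nu,\mu},\nu)$, $f_{\nu,\mu}=T_\varepsilon(f_{\mu,\nu},\mu)$, $\int f_{\mu,\nu}d\mu=\int f_{\nu,\mu}d\nu$. $k_{\mu,\nu}(x,y):=\exp((f_{\mu,\nu}(x)+f_{\nu,\mu}(y)-c(x,y))/\varepsilon)$; $H_{\mu,\nu}[\sigma](x):=\int k_{\mu,\nu}(x,y)d\sigma(y)$ for $\sigma\in\mathcal M(\mathcal X)$; $K_{\mu,\nu}[\phi]:=H_{\mu,\nu}[\phi\nu]$ for $\phi\in C(\mathcal X)$ (so $K_{\mu,\nu}[1]=1$). $C(\mathcal X)/\mathbb R$ carries the quotient norm $\inf_{\lambda}\|\phi-\lambda\|_\infty$. *)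

From HB Require Import structures.
From mathcomp Require Import all_boot all_order all_algebra.
From mathcomp Require Import all_classical all_reals all_analysis.

Set Implicit Arguments.
Unset Strict Implicit.
Unset Printing Implicit Defensive.

Import Order.TTheory GRing.Theory Num.Theory.
Import numFieldNormedType.Exports.

Local Open Scope classical_set_scope.
Local Open Scope ring_scope.

Notation borelType T := (g_sigma_algebraType (@open T)).

Section Defs.
Variable R : realType.
Variable T : pseudoPMetricType R.

Definition supnorm (phi : T -> R) : R := sup [set `|phi x| | x in [set: T]].

Definition qnorm (phi : T -> R) : R :=
  inf [set supnorm (fun x => phi x - l) | l in [set: R]].

Definition pos_def_kernel (k : T -> T -> R) : Prop :=
  forall (n : nat) (xs : 'I_n -> T) (a : 'I_n -> R),
    0 <= \sum_(i < n) \sum_(j < n) a i * a j * k (xs i) (xs j).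

Definition universal_kernel (k : T -> T -> R) : Prop :=
  forall phi : T -> R, continuous phi ->
  forall e : R, 0 < e ->
  exists n (xs : 'I_n -> T) (a : 'I_n -> R),
    forall x, `|phi x - \sum_(i < n) a i * k x (xs i)| < e.

Definition Tsch (eps : R) (c : T -> T -> R) (f : T -> R)
  (mu : probability (borelType T) R) : T -> R :=
  fun y => - eps * ln (Rintegral mu [set: borelType T]
                         (fun x => expR ((f x - c x y) / eps))).

(* k(x,y) = exp((f x + g y - c x y)/eps); with (f,g) = (f_{mu,nu}, f_{nu,mu})
   this is k_{mu,nu}, with (f,g) = (f_{nu,mu}, f_{mu,nu}) it is k_{nu,mu}. *)
Definition kern (eps : R) (c : T -> T -> R) (f g : T -> R) : T -> T -> R :=
  fun x y => expR ((f x + g y - c x y) / eps).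

Definition Kop (eps : R) (c : T -> T -> R) (f g : T -> R)
  (nu : probability (borelType T) R) (phi : T -> R) : T -> R :=
  fun x => Rintegral nu [set: borelType T] (fun y => kern eps c f g x y * phi y).

End Defs.

(* Let P := K_{mu,nu} K_{nu,mu}.  The Schrodinger equations say that both kernels
   are Markov, so P is linear on C(X) and fixes constants; as k_{mu,nu} >= delta > 0
   on the compact X * X, Doeblin's argument shows that P contracts the oscillation
   sup - inf by the factor 1 - delta.  The oscillation is twice the quotient norm,
   so Id - P is Lipschitz on C(X)/R.  If phi - P phi is constant, the oscillation
   of phi is at most (1 - delta)^n times itself, so phi is constant.  Finally the
   Neumann series sum_n P^n psi, with each term recentred to vanish at a base
   point, converges uniformly to a preimage of psi modulo constants. *)

From HB Require Import structures.
From mathcomp Require Import all_boot all_order all_algebra.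
From mathcomp Require Import all_classical all_reals all_analysis.
From mathcomp Require Import measurable_realfun.
From mathcomp Require Import ring lra.
Set Implicit Arguments.
Unset Strict Implicit.
Unset Printing Implicit Defensive.
Import Order.TTheory GRing.Theory Num.Theory.
Import numFieldNormedType.Exports.
Local Open Scope classical_set_scope.
Local Open Scope ring_scope.

Section Oscillation.
Variables (R : realFieldType) (T : Type).
Implicit Types (u v : T -> R) (w : R).

Definition osc_le u w := exists lo, forall x, lo <= u x <= lo + w.

Lemma osc_le_trans u w w' : w <= w' -> osc_le u w -> osc_le u w'.
Proof.
move=> ww' [lo hu]; exists lo => x; have /andP[h1 h2] := hu x.
by rewrite h1 (le_trans h2) // lerD2l.
Qed.

Lemma osc_leB u v w w' : osc_le u w -> osc_le v w' ->
  osc_le (fun x => u x - v x) (w + w').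
Proof.
move=> [lo hu] [lo' hv]; exists (lo - lo' - w') => x.
have /andP[h1 h2] := hu x; have /andP[h3 h4] := hv x.
by apply/andP; split; lra.
Qed.

Lemma osc_le_addr u w l : osc_le u w -> osc_le (fun x => u x + l) w.
Proof.
move=> [lo hu]; exists (lo + l) => x; have /andP[h1 h2] := hu x.
by apply/andP; split; lra.
Qed.

Lemma osc_le_norm u w x0 : osc_le u w -> u x0 = 0 -> forall x, `|u x| <= w.
Proof.
move=> [lo hu] ux0 x; have := hu x0; have := hu x; rewrite ux0.
by move=> /andP[h1 h2] /andP[h3 h4]; rewrite ler_norml; apply/andP; split; lra.
Qed.

Lemma osc_le0_cst u : (forall w, 0 < w -> osc_le u w) -> forall x y, u x = u y.
Proof.
have le_uxy x y : (forall w, 0 < w -> osc_le u w) -> u x <= u y.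
  move=> hu; apply/ler_addgt0Pr => w /hu [lo /[dup] /(_ x) /andP[_ h1] /(_ y) /andP[h2 _]].
  lra.
by move=> hu x y; apply/eqP; rewrite eq_le !le_uxy.
Qed.

End Oscillation.

Section CompactSpace.
Variables (R : realType) (T : topologicalType).
Hypothesis cT : compact [set: T].

Lemma continuous_lower_bound (u : T -> R) : continuous u -> [set: T] !=set0 ->
  exists x0, forall x, u x0 <= u x.
Proof.
move=> cu T0; have [|x0 _ hx0] := @compact_EVT_min T R u setT T0 cT.
  exact: continuous_subspaceT.
by exists x0 => x; apply: hx0; rewrite inE.
Qed.

Lemma continuous_upper_bound (u : T -> R) : continuous u -> [set: T] !=set0 ->
  exists x0, forall x, u x <= u x0.
Proof.
move=> cu T0; have [x0 hx0] : exists x0, forall x, - u x0 <= - u x.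
  by apply: continuous_lower_bound T0 => x; exact: (continuousN (cu x)).
by exists x0 => x; rewrite -lerN2.
Qed.

Lemma continuous_osc_le (u : T -> R) : continuous u -> exists w, osc_le u w.
Proof.
move=> cu; have [T0|T0] := pselect ([set: T] !=set0); last first.
  by exists 0, 0 => x; exfalso; apply: T0; exists x.
have [xm hm] := continuous_lower_bound cu T0.
have [xM hM] := continuous_upper_bound cu T0.
by exists (u xM - u xm), (u xm) => x; rewrite addrC subrK hm hM.
Qed.

Lemma continuous_bounded (u : T -> R) : continuous u -> exists B, forall x, `|u x| <= B.
Proof.
move=> cu; have [w [lo hu]] := continuous_osc_le cu.
have nlo : - `|lo| <= lo <= `|lo| by rewrite -ler_norml.
have nhi : - `|lo + w| <= lo + w <= `|lo + w| by rewrite -ler_norml.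
exists (`|lo| + `|lo + w|) => x; move: nlo nhi (hu x).
by rewrite ler_norml => /andP[l1 l2] /andP[h1 h2] /andP[u1 u2]; apply/andP; split; lra.
Qed.

Lemma continuous_pos_lower_bound (u : T -> R) : continuous u -> (forall x, 0 < u x) ->
  exists2 d, 0 < d & forall x, d <= u x.
Proof.
move=> cu u_gt0; have [T0|T0] := pselect ([set: T] !=set0); last first.
  by exists 1 => // x; exfalso; apply: T0; exists x.
by have [x0 hx0] := continuous_lower_bound cu T0; exists (u x0).
Qed.

End CompactSpace.

Section IntegralOperator.
Variables (R : realType) (T : ptopologicalType).
Hypothesis cT : compact [set: T].
Variable rho : probability (borelType T) R.
Local Notation Int u := (Rintegral rho [set: borelType T] u).

Lemma continuous_measurable_fun (u : T -> R) : continuous u ->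
  measurable_fun [set: borelType T] (u : borelType T -> R).
Proof.
move=> cu; apply: (measurability _ (RGenOpens.measurableE R)).
move=> _ [_ [a [b ->]] <-]; apply: sub_sigma_algebra.
by rewrite setTI; apply: (continuousP _).1 => //; exact: interval_open.
Qed.

Lemma continuous_integrable (u : T -> R) :
  continuous u -> rho.-integrable [set: borelType T] (EFin \o u).
Proof.
move=> cu; have [B hB] := continuous_bounded cT cu.
apply: (@le_integrable _ _ _ rho _ _ (EFin \o u) (EFin \o cst B)) => //.
- by apply/measurable_EFinP; exact: continuous_measurable_fun.
- by move=> x _ /=; rewrite lee_fin (le_trans (hB x)) ?ler_norm.
- exact: finite_measure_integrable_cst.
Qed.

Lemma RintD (u v : T -> R) : continuous u -> continuous v ->
  Int (fun y => u y + v y) = Int u + Int v.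
Proof. by move=> cu cv; apply: RintegralD => //; exact: continuous_integrable. Qed.

Lemma RintB (u v : T -> R) : continuous u -> continuous v ->
  Int (fun y => u y - v y) = Int u - Int v.
Proof. by move=> cu cv; apply: RintegralB => //; exact: continuous_integrable. Qed.

Lemma RintZ (a : R) (u : T -> R) : continuous u -> Int (fun y => a * u y) = a * Int u.
Proof. by move=> cu; apply: RintegralZl => //; exact: continuous_integrable. Qed.

Lemma Rint_cst (l : R) : Int (fun _ => l) = l.
Proof. by rewrite Rintegral_cst //= probability_setT /= mulr1. Qed.

Lemma Rint_le (u v : T -> R) : continuous u -> continuous v ->
  (forall y, u y <= v y) -> Int u <= Int v.
Proof. by move=> cu cv uv; apply: le_Rintegral => //; exact: continuous_integrable. Qed.

Lemma Rint_norm (u : T -> R) : continuous u -> `|Int u| <= Int (fun y => `|u y|).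
Proof. by move=> cu; apply: le_normr_Rintegral => //; exact: continuous_integrable. Qed.

Variable k : T -> T -> R.
Hypothesis kc : continuous (fun p : T * T => k p.1 p.2).

Definition kernel_op (u : T -> R) : T -> R := fun x => Int (fun y => k x y * u y).

Lemma continuous_section x : continuous (k x).
Proof.
move=> y; apply: (@continuous_comp _ _ _ (pair x) (fun p : T * T => k p.1 p.2)); last exact: kc.
by apply: cvg_pair; [exact: cvg_cst | exact: cvg_id].
Qed.

Lemma continuous_kernelM x (u : T -> R) : continuous u -> continuous (fun y => k x y * u y).
Proof. by move=> cu y; exact: (continuousM (@continuous_section x y) (cu y)). Qed.

(* Compactness of [T] turns joint continuity into continuity of [x |-> k x]
   for the uniform norm. *)
Lemma near_section_unif (x0 : T) (e : R) : 0 < e ->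
  \forall x \near x0, forall y, `|k x y - k x0 y| < e.
Proof.
move=> e0.
have near_y (y : T) : [set: T] y ->
    \forall y' \near y & x \near x0, `|k x y' - k x0 y'| < e.
  move=> _; have /cvgrPdist_lt/(_ (e / 2)) := @kc (x0, y).
  case=> [|[U V] /= [nU nV] UV]; first by rewrite divr_gt0.
  exists (V, U) => // -[y' x] /= [Vy' Ux].
  have := UV (x, y') (conj Ux Vy'); have := UV (x0, y') (conj (nbhs_singleton nU) Vy').
  rewrite /= => h1 h2.
  rewrite (_ : k x y' - k x0 y' = (k x0 y - k x0 y') - (k x0 y - k x y')); last by ring.
  by rewrite (le_lt_trans (ler_normB _ _)) // (splitr e) ltrD.
have := (compact_near_coveringP setT).1 cT T (nbhs x0)
  (fun x y => `|k x y - k x0 y| < e) (nbhs_filter x0) near_y.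
by apply: filterS => x hx y; exact: hx.
Qed.

Lemma kernel_op_continuous (u : T -> R) : continuous u -> continuous (kernel_op u).
Proof.
move=> cu x0; have [B hB] := continuous_bounded cT cu.
have B0 : 0 <= B by exact: le_trans (hB x0).
apply/cvgrPdist_lt => e e0.
have e'0 : 0 < e / 2 / (B + 1) by rewrite !divr_gt0 //; lra.
near=> x.
have hx := near (near_section_unif x0 e'0) x.
have cdiff : continuous (fun y => k x0 y * u y - k x y * u y).
  by move=> y; apply: cvgB; exact: continuous_kernelM.
rewrite /kernel_op -RintB; try exact: continuous_kernelM.
apply: le_lt_trans (Rint_norm cdiff) _.
apply: (@le_lt_trans _ _ (Int (fun _ => e / 2))); last by rewrite Rint_cst; lra.
apply: Rint_le => [y||y]; first by apply: continuous_comp (cdiff y) _; exact: norm_continuous.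
  exact: cst_continuous.
have kxy : `|k x0 y - k x y| <= e / 2 / (B + 1) by rewrite distrC ltW //; exact: hx.
rewrite -mulrBl normrM (le_trans (ler_pM _ _ kxy (hB y))) //.
rewrite -[leRHS](@divfK _ (B + 1)); last by apply: lt0r_neq0; lra.
by rewrite ler_pM2l //; lra.
Unshelve. all: end_near.
Qed.

Lemma kernel_op_linear (a : R) (u v : T -> R) : continuous u -> continuous v ->
  kernel_op (fun y => a * u y + v y) = (fun x => a * kernel_op u x + kernel_op v x).
Proof.
move=> cu cv; apply/funext => x; rewrite /kernel_op -RintZ; last exact: continuous_kernelM.
rewrite -RintD; last 2 first.
- by move=> y; apply: cvgM; [exact: cvg_cst | exact: continuous_kernelM].
- exact: continuous_kernelM.
by congr Rintegral; apply/funext => y; ring.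
Qed.

Hypothesis k_norm : forall x, Int (k x) = 1.

Lemma kernel_op_cst (l : R) : kernel_op (fun _ => l) = (fun _ => l).
Proof.
apply/funext => x; rewrite /kernel_op -[RHS]mulr1 -(k_norm x).
rewrite -RintZ; last exact: continuous_section.
by congr Rintegral; apply/funext => y; rewrite mulrC.
Qed.

Variable delta : R.
Hypothesis k_ge : forall x y, delta <= k x y.

Lemma kernel_lb_le1 : delta <= 1.
Proof.
rewrite -(k_norm point) -[leLHS](Rint_cst delta).
by apply: Rint_le => //; [exact: cst_continuous | exact: continuous_section].
Qed.

(* Doeblin's argument: [k x = delta + (k x - delta)], where the constant part
   does not depend on [x] and the remainder has mass [1 - delta]. *)
Lemma kernel_op_osc_le (u : T -> R) (w : R) : continuous u -> osc_le u w ->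
  osc_le (kernel_op u) ((1 - delta) * w).
Proof.
move=> cu [lo hu].
have ck x : continuous (fun y => k x y - delta).
  by move=> y; apply: cvgB; [exact: continuous_section | exact: cvg_cst].
have remainder_cst x l : Int (fun y => (k x y - delta) * l) = (1 - delta) * l.
  rewrite (_ : (fun y => _) = (fun y => l * k x y - l * delta)); last first.
    by apply/funext => y; ring.
  rewrite RintB; last 2 first.
  - by move=> y; apply: cvgM; [exact: cvg_cst | exact: continuous_section].
  - exact: cst_continuous.
  rewrite RintZ; last exact: continuous_section.
  by rewrite Rint_cst k_norm; ring.
have split x : kernel_op u x = Int (fun y => (k x y - delta) * u y) + delta * Int u.
  rewrite -RintZ // -RintD; last 2 first.
  - by move=> y; apply: cvgM; [exact: ck | exact: cu].
  - by move=> y; apply: cvgM; [exact: cvg_cst | exact: cu].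
  by rewrite /kernel_op; congr Rintegral; apply/funext => y; ring.
exists (delta * Int u + (1 - delta) * lo) => x.
have cM l : continuous (fun y => (k x y - delta) * l).
  by move=> y; apply: cvgM; [exact: ck | exact: cvg_cst].
have cMu : continuous (fun y => (k x y - delta) * u y).
  by move=> y; apply: cvgM; [exact: ck | exact: cu].
have lo_le : (1 - delta) * lo <= Int (fun y => (k x y - delta) * u y).
  rewrite -(remainder_cst x); apply: Rint_le => // y.
  by have /andP[h _] := hu y; rewrite ler_wpM2l // subr_ge0.
have le_hi : Int (fun y => (k x y - delta) * u y) <= (1 - delta) * (lo + w).
  rewrite -(remainder_cst x); apply: Rint_le => // y.
  by have /andP[_ h] := hu y; rewrite ler_wpM2l // subr_ge0.
by rewrite split; apply/andP; split; lra.
Qed.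

End IntegralOperator.

Section QuotientNorm.
Variables (R : realType) (T : pseudoPMetricType R).
Hypothesis cT : compact [set: T].

Lemma ler_supnorm (v : T -> R) x : continuous v -> `|v x| <= supnorm v.
Proof.
move=> cv; have [B hB] := continuous_bounded cT cv.
apply: sup_upper_bound; last by exists x.
by split; [exists `|v x|, x | exists B => _ [y _ <-]].
Qed.

Lemma supnorm_le (v : T -> R) b : (forall x, `|v x| <= b) -> supnorm v <= b.
Proof. by move=> vb; apply: ge_sup => [|_ [x _ <-]]; [exists `|v point|, point | exact: vb]. Qed.

Lemma qnorm_lbound (u : T -> R) : continuous u ->
  lbound [set supnorm (fun x => u x - l) | l in [set: R]] 0.
Proof.
move=> cu _ [l _ <-]; apply: le_trans (ler_supnorm point _) => //.
by move=> x; apply: cvgB; [exact: cu | exact: cvg_cst].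
Qed.

Lemma qnorm_le_osc (u : T -> R) w : continuous u -> osc_le u w -> qnorm u <= w / 2.
Proof.
move=> cu [lo hu]; apply: (@le_trans _ _ (supnorm (fun x => u x - (lo + w / 2)))).
  by apply: ge_inf; [exists 0; exact: qnorm_lbound | exists (lo + w / 2)].
by apply: supnorm_le => x; have /andP[h1 h2] := hu x; rewrite ler_norml; apply/andP; split; lra.
Qed.

Lemma osc_le_qnorm_lt (u : T -> R) d : continuous u -> qnorm u < d -> osc_le u (2 * d).
Proof.
move=> cu ud.
have hinf : has_inf [set supnorm (fun x => u x - l) | l in [set: R]].
  by split; [exists (supnorm (fun x => u x - 0)), 0 | exists 0; exact: qnorm_lbound].
have gap : 0 < d - qnorm u by rewrite subr_gt0.
have [_ [l _ <-]] := inf_adherent gap hinf.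
rewrite /qnorm addrC subrK => uld.
have cul : continuous (fun x => u x - l) by move=> x; apply: cvgB; [exact: cu | exact: cvg_cst].
exists (l - d) => x; have := le_lt_trans (ler_supnorm x cul) uld.
by rewrite ltr_norml => /andP[h1 h2]; apply/andP; split; lra.
Qed.

End QuotientNorm.

Lemma expr_mul_small (R : realType) (B th e : R) : 0 <= th -> th < 1 -> 0 < e ->
  exists N, th ^+ N * B < e.
Proof.
move=> th0 th1 e0; have eB : 0 < e / (`|B| + 1) by rewrite divr_gt0 ?ltr_wpDl.
have th_lt1 : `|th| < 1 by rewrite ger0_norm.
have [N _ hN] := cvgr0_norm_lt _ (cvg_expr th_lt1) _ eB.
exists N; have := hN N (leqnn N); rewrite /= ger0_norm ?exprn_ge0 // => thN.
apply: (@le_lt_trans _ _ (th ^+ N * (`|B| + 1))).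
  by rewrite ler_wpM2l ?exprn_ge0 // (le_trans (ler_norm B)) // lerDl.
by rewrite -ltr_pdivlMr ?ltr_wpDl.
Qed.

Section GeometricSeries.
Variables (R : realType) (T : ptopologicalType).
Variables (a : nat -> T -> R) (th B : R).
Hypotheses (th0 : 0 <= th) (th1 : th < 1).
Hypothesis a_le : forall n x, `|a n x| <= th ^+ n * B.

Definition geom_tail (N : nat) : R := th ^+ N * B / (1 - th).

(* The sum of the series, as the supremum of its increasing lower bounds
   (which spares us any limit argument). *)
Definition series_sup (x : T) : R :=
  sup [set \sum_(n < N) a n x - geom_tail N | N in [set: nat]].

Local Notation S N x := (\sum_(n < N) a n x).

Lemma geom_bound_ge0 : 0 <= B.
Proof. by have := a_le 0 point; rewrite expr0 mul1r; exact: le_trans. Qed.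

Lemma geom_tail_ge0 N : 0 <= geom_tail N.
Proof. by rewrite divr_ge0 ?mulr_ge0 ?exprn_ge0 ?geom_bound_ge0 // subr_ge0 ltW. Qed.

Lemma geom_tailS N : geom_tail N = th ^+ N * B + geom_tail N.+1.
Proof. by rewrite /geom_tail exprS; field; rewrite subr_eq0 gt_eqF. Qed.

Lemma partial_sum_gap N k x :
  `|S (N + k) x - S N x| <= geom_tail N - geom_tail (N + k).
Proof.
elim: k => [|k IH]; first by rewrite addn0 !subrr normr0.
rewrite addnS big_ord_recr /=; rewrite (geom_tailS (N + k)) in IH.
have := a_le (N + k) x; move: IH; rewrite !ler_norml => /andP[h1 h2] /andP[h3 h4].
by apply/andP; split; lra.
Qed.

Lemma partial_sum_cross M N x : S M x - geom_tail M <= S N x + geom_tail N.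
Proof.
have tM := geom_tail_ge0 M; have tN := geom_tail_ge0 N.
case: (leqP M N) => [MN | /ltnW NM].
  have := partial_sum_gap M (N - M) x; rewrite subnKC // ler_norml.
  by move=> /andP[h _]; lra.
have := partial_sum_gap N (M - N) x; rewrite subnKC // ler_norml.
by move=> /andP[_ h]; lra.
Qed.

Lemma series_sup_approx N x : `|series_sup x - S N x| <= geom_tail N.
Proof.
have ne : [set S M x - geom_tail M | M in [set: nat]] !=set0.
  by exists (S 0 x - geom_tail 0), 0%N.
have lo : S N x - geom_tail N <= series_sup x.
  apply: sup_upper_bound; last by exists N.
  by split => //; exists (S N x + geom_tail N) => _ [M _ <-]; exact: partial_sum_cross.
have hi : series_sup x <= S N x + geom_tail N.
  by apply: ge_sup => // _ [M _ <-]; exact: partial_sum_cross.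
by rewrite ler_norml; apply/andP; split; lra.
Qed.

Lemma geom_tail_ge N : th ^+ N * B <= geom_tail N.
Proof. by rewrite geom_tailS lerDl geom_tail_ge0. Qed.

Lemma geom_tail_small e : 0 < e -> exists N, geom_tail N < e.
Proof.
move=> e0; have [N hN] := expr_mul_small (B / (1 - th)) th0 th1 e0.
by exists N; rewrite /geom_tail -mulrA.
Qed.

Lemma continuous_partial_sum N : (forall n, continuous (a n)) ->
  continuous (fun x => S N x).
Proof. by move=> ca; apply: (continuous_big add_continuous) => n _; exact: ca. Qed.

Lemma series_sup_continuous : (forall n, continuous (a n)) -> continuous series_sup.
Proof.
move=> ca x; apply/cvgrPdist_lt => e e0.
have e3 : 0 < e / 3 by rewrite divr_gt0.
have [N tN] := geom_tail_small e3.
move/cvgrPdist_lt/(_ _ e3): (@continuous_partial_sum N ca x); apply: filterS => y.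
have := series_sup_approx N x; have := series_sup_approx N y.
rewrite !ltr_norml !ler_norml => /andP[h1 h2] /andP[h3 h4] /andP[h5 h6].
by apply/andP; split; lra.
Qed.

End GeometricSeries.

Section OscillationContraction.
Variables (R : realType) (T : pseudoPMetricType R).
Hypothesis cT : compact [set: T].
Variables (P : (T -> R) -> T -> R) (th : R).
Hypotheses (th0 : 0 <= th) (th1 : th < 1).
Hypothesis P_continuous : forall u, continuous u -> continuous (P u).
Hypothesis P_linear : forall (a : R) u v, continuous u -> continuous v ->
  P (fun x => a * u x + v x) = (fun x => a * P u x + P v x).
Hypothesis P_cst : forall l : R, P (fun _ => l) = (fun _ => l).
Hypothesis P_osc_le : forall u w, continuous u -> osc_le u w -> osc_le (P u) (th * w).

Lemma P_add u v : continuous u -> continuous v ->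
  P (fun x => u x + v x) = (fun x => P u x + P v x).
Proof.
move=> cu cv; have -> : (fun x => u x + v x) = (fun x => 1 * u x + v x).
  by apply/funext => x; rewrite mul1r.
by rewrite P_linear //; apply/funext => x; rewrite mul1r.
Qed.

Lemma P_sub u v : continuous u -> continuous v ->
  P (fun x => u x - v x) = (fun x => P u x - P v x).
Proof.
move=> cu cv; have -> : (fun x => u x - v x) = (fun x => -1 * v x + u x).
  by apply/funext => x; rewrite mulN1r addrC.
by rewrite P_linear //; apply/funext => x; rewrite mulN1r addrC.
Qed.

Lemma IdP_continuous u : continuous u -> continuous (fun x => u x - P u x).
Proof. by move=> cu x; apply: cvgB; [exact: cu | exact: P_continuous]. Qed.

Lemma IdP_linear (a : R) u v : continuous u -> continuous v ->
  (fun x => (a * u x + v x) - P (fun y => a * u y + v y) x) =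
  (fun x => a * (u x - P u x) + (v x - P v x)).
Proof. by move=> cu cv; rewrite P_linear //; apply/funext => x; ring. Qed.

Lemma IdP_quotient_wd u v : continuous u -> continuous v ->
  (exists l, u = (fun x => v x + l)) ->
  exists l', (fun x => u x - P u x) = (fun x => (v x - P v x) + l').
Proof.
move=> cu cv [l ->]; exists 0; rewrite P_add ?P_cst //; last by move=> x; exact: cvg_cst.
by apply/funext => x; ring.
Qed.

Lemma IdP_qnorm_le u d : continuous u -> 0 < d -> qnorm u < d ->
  qnorm (fun x => u x - P u x) <= 2 * d.
Proof.
move=> cu d0 /(osc_le_qnorm_lt cT cu) osc_u.
have := qnorm_le_osc cT (IdP_continuous cu) (osc_leB osc_u (P_osc_le cu osc_u)).
have : th * (2 * d) <= 2 * d by rewrite ler_piMl // ?mulr_ge0 // ltW.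
lra.
Qed.

Lemma IdP_qnorm_continuous u0 : continuous u0 -> forall e, 0 < e ->
  exists2 d, 0 < d & forall u, continuous u -> qnorm (fun x => u x - u0 x) < d ->
    qnorm (fun x => (u x - P u x) - (u0 x - P u0 x)) < e.
Proof.
move=> cu0 e e0; exists (e / 4) => [|u cu small]; first by rewrite divr_gt0.
have cv : continuous (fun x => u x - u0 x) by move=> x; apply: cvgB; [exact: cu | exact: cu0].
have -> : (fun x => (u x - P u x) - (u0 x - P u0 x)) =
    (fun x => (u x - u0 x) - P (fun y => u y - u0 y) x).
  by rewrite P_sub //; apply/funext => x; ring.
by apply: le_lt_trans (IdP_qnorm_le cv _ small) _; [rewrite divr_gt0 | lra].
Qed.

Lemma IdP_inj u : continuous u -> (exists l, (fun x => u x - P u x) = (fun=> l)) ->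
  exists l, u = (fun=> l).
Proof.
move=> cu [l ul]; have [w osc_u] := continuous_osc_le cT cu.
have u_eq : (fun x => P u x + l) = u.
  by apply/funext => x; have := congr1 (fun h => h x) ul => /= <-; ring.
have osc_n n : osc_le u (th ^+ n * w).
  elim: n => [|n IH]; first by rewrite expr0 mul1r.
  by rewrite exprS -mulrA -u_eq; exact/osc_le_addr/P_osc_le.
have u_cst : forall x y, u x = u y.
  apply: osc_le0_cst => e e0; have [N hN] := expr_mul_small w th0 th1 e0.
  exact: osc_le_trans (ltW hN) (osc_n N).
by exists (u point); apply/funext => x; exact: u_cst.
Qed.

Section Preimage.
Variables (psi : T -> R) (w : R).
Hypotheses (cpsi : continuous psi) (osc_psi : osc_le psi w).
Let x0 : T := point.

(* Modulo constants, [pinned_iter n] is [P^n psi]; pinning the terms at [x0]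
   makes them geometrically small, not merely of small oscillation. *)
Fixpoint pinned_iter (n : nat) : T -> R :=
  if n is m.+1 then (fun x => P (pinned_iter m) x - P (pinned_iter m) x0)
  else (fun x => psi x - psi x0).

Lemma pinned_iter_continuous n : continuous (pinned_iter n).
Proof.
elim: n => [|n IH] x /=; first by apply: cvgB; [exact: cpsi | exact: cvg_cst].
by apply: cvgB; [exact: P_continuous | exact: cvg_cst].
Qed.

Lemma pinned_iter_osc_le n : osc_le (pinned_iter n) (th ^+ n * w).
Proof.
elim: n => [|n IH] /=; first by rewrite expr0 mul1r; exact: osc_le_addr.
by rewrite exprS -mulrA; apply/osc_le_addr/P_osc_le => //; exact: pinned_iter_continuous.
Qed.

Lemma pinned_iter_le n x : `|pinned_iter n x| <= th ^+ n * w.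
Proof.
have vanish : pinned_iter n x0 = 0 by case: n => [|n] /=; rewrite subrr.
exact: osc_le_norm (pinned_iter_osc_le n) vanish x.
Qed.

Let phi := series_sup pinned_iter th w.
Let S N x := \sum_(n < N) pinned_iter n x.
Let C N := \sum_(n < N) P (pinned_iter n) x0.

Lemma partial_sum_IdP N x :
  S N x - P (S N) x = psi x - psi x0 - pinned_iter N x - C N.
Proof.
elim: N x => [|N IH] x.
  rewrite /S /C big_ord0 (_ : (fun _ => _) = (fun _ => 0)); last first.
    by apply/funext => y; rewrite big_ord0.
  by rewrite P_cst big_ord0 /=; ring.
have -> : S N.+1 = (fun y => S N y + pinned_iter N y).
  by apply/funext => y; rewrite /S big_ord_recr.
rewrite P_add; last 2 first.
- exact: continuous_partial_sum pinned_iter_continuous.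
- exact: pinned_iter_continuous.
by rewrite /C big_ord_recr /= -/(C N); have IH_x := IH x; lra.
Qed.

Lemma series_continuous : continuous phi.
Proof. exact: series_sup_continuous th0 th1 pinned_iter_le pinned_iter_continuous. Qed.

Lemma series_IdP_cst x : phi x - P phi x - psi x = phi x0 - P phi x0 - psi x0.
Proof.
pose v z := phi z - P phi z - psi z.
suff : forall x y, v x = v y by apply.
apply: osc_le0_cst => e e0.
have e5 : 0 < e / 5 by rewrite divr_gt0.
have [N tN] := geom_tail_small w th0 th1 e5.
have tN0 := geom_tail_ge0 th0 th1 pinned_iter_le N.
have thN := geom_tail_ge th0 th1 pinned_iter_le N.
have cS : continuous (S N) by exact: continuous_partial_sum pinned_iter_continuous.
pose r z := phi z - S N z.
have cr : continuous r.
  by move=> y; apply: cvgB; [exact: series_continuous | exact: cS].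
have osc_r : osc_le r (2 * geom_tail th w N).
  exists (- geom_tail th w N) => y.
  have := series_sup_approx th0 th1 pinned_iter_le N y.
  by rewrite ler_norml => /andP[h1 h2]; apply/andP; split; rewrite /r /phi /S; lra.
have := osc_le_addr (- C N - psi x0)
  (osc_leB (osc_leB osc_r (P_osc_le cr osc_r)) (pinned_iter_osc_le N)).
have -> : (fun z => r z - P r z - pinned_iter N z + (- C N - psi x0)) = v.
  apply/funext => z; rewrite /r P_sub //; last exact: series_continuous.
  by have IdP_SN := partial_sum_IdP N z; rewrite /v; lra.
apply: osc_le_trans.
have : th * (2 * geom_tail th w N) <= 2 * geom_tail th w N.
  by apply: ler_piMl; [rewrite mulr_ge0 | exact: ltW].
lra.
Qed.

Lemma IdP_preimage : exists2 phi, continuous phi &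
  exists l, (fun x => phi x - P phi x) = (fun x => psi x + l).
Proof.
exists phi; first exact: series_continuous.
exists (phi x0 - P phi x0 - psi x0); apply/funext => x.
by rewrite -(series_IdP_cst x); ring.
Qed.

End Preimage.

Lemma IdP_surj psi : continuous psi -> exists2 phi, continuous phi &
  exists l, (fun x => phi x - P phi x) = (fun x => psi x + l).
Proof. by move=> cpsi; have [w] := continuous_osc_le cT cpsi; exact: IdP_preimage. Qed.

End OscillationContraction.

Section SchrodingerKernel.
Variables (R : realType) (T : pseudoPMetricType R) (eps : R) (c : T -> T -> R).
Hypotheses (cT : compact [set: T]) (eps0 : 0 < eps).
Hypotheses (cc : continuous (fun p : T * T => c p.1 p.2)) (c_sym : forall x y, c x y = c y x).

Lemma kern_continuous (a b : T -> R) : continuous a -> continuous b ->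
  continuous (fun p : T * T => kern eps c a b p.1 p.2).
Proof.
move=> ca cb p.
apply: (@continuous_comp _ _ _ (fun p : T * T => (a p.1 + b p.2 - c p.1 p.2) / eps) expR);
  last exact: continuous_expR.
apply: cvgM; last exact: cvg_cst.
apply: cvgB; last exact: cc.
by apply: cvgD; apply: continuous_comp; [exact: cvg_fst | exact: ca | exact: cvg_snd | exact: cb].
Qed.

Lemma kern_Tsch_norm (a : T -> R) (rho : probability (borelType T) R) :
  continuous a ->
  forall x, Rintegral rho [set: borelType T] (kern eps c (Tsch eps c a rho) a x) = 1.
Proof.
move=> ca x; pose J := Rintegral rho [set: borelType T] (fun y => expR ((a y - c y x) / eps)).
have cJ : continuous (fun y => expR ((a y - c y x) / eps)).
  move=> y; apply: (@continuous_comp _ _ _ (fun y => (a y - c y x) / eps) expR);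
    last exact: continuous_expR.
  apply: cvgM; last exact: cvg_cst.
  apply: cvgB; first exact: ca.
  apply: (@continuous_comp _ _ _ (fun y => (y, x)) (fun p : T * T => c p.1 p.2)); last exact: cc.
  by apply: cvg_pair; [exact: cvg_id | exact: cvg_cst].
have [d d0 hd] := continuous_pos_lower_bound cT cJ (fun y => expR_gt0 _).
have J0 : 0 < J.
  apply: lt_le_trans d0 _; rewrite -(Rint_cst rho d).
  by apply: Rint_le => //; exact: cst_continuous.
have -> : kern eps c (Tsch eps c a rho) a x =
    (fun y => expR (- ln J) * expR ((a y - c y x) / eps)).
  apply/funext => y; rewrite /kern /Tsch -expRD c_sym; congr expR.
  by rewrite -/J; field; exact: lt0r_neq0.
by rewrite RintZ // expRN lnK ?posrE // mulVf // gt_eqF.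
Qed.

End SchrodingerKernel.

Section SchrodingerOperator.
Variables (R : realType) (T : pseudoPMetricType R) (eps : R) (c : T -> T -> R).
Variables (mu nu : probability (borelType T) R) (f g : T -> R).
Hypotheses (cT : compact [set: T]) (eps0 : 0 < eps).
Hypotheses (cc : continuous (fun p : T * T => c p.1 p.2)) (c_sym : forall x y, c x y = c y x).
Hypotheses (cf : continuous f) (cg : continuous g).
Hypotheses (f_eq : f = Tsch eps c g nu) (g_eq : g = Tsch eps c f mu).

Let K1 := kernel_op nu (kern eps c f g).
Let K2 := kernel_op mu (kern eps c g f).
Let kc1 := kern_continuous (eps := eps) cc cf cg.
Let kc2 := kern_continuous (eps := eps) cc cg cf.

Let K1_norm x : Rintegral nu [set: borelType T] (kern eps c f g x) = 1.
Proof. by rewrite f_eq; exact: kern_Tsch_norm. Qed.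

Let K2_norm x : Rintegral mu [set: borelType T] (kern eps c g f x) = 1.
Proof. by rewrite g_eq; exact: kern_Tsch_norm. Qed.

Lemma KK_continuous u : continuous u -> continuous (K1 (K2 u)).
Proof.
by move=> cu; apply: (kernel_op_continuous cT kc1); exact: (kernel_op_continuous cT kc2).
Qed.

Lemma KK_linear (a : R) u v : continuous u -> continuous v ->
  K1 (K2 (fun x => a * u x + v x)) = (fun x => a * K1 (K2 u) x + K1 (K2 v) x).
Proof.
move=> cu cv; rewrite /K2 (kernel_op_linear cT mu kc2 a cu cv).
by apply: (kernel_op_linear cT nu kc1); exact: (kernel_op_continuous cT kc2).
Qed.

Lemma KK_cst (l : R) : K1 (K2 (fun _ => l)) = (fun _ => l).
Proof. by rewrite /K1 /K2 (kernel_op_cst cT kc2 K2_norm) (kernel_op_cst cT kc1 K1_norm). Qed.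

Lemma KK_osc_contraction : exists2 th, 0 <= th < 1 &
  forall u w, continuous u -> osc_le u w -> osc_le (K1 (K2 u)) (th * w).
Proof.
have cTT : compact [set: T * T] by rewrite -setXTT; exact: compact_setX.
have [d d0 d_le] := continuous_pos_lower_bound cTT kc1 (fun p => expR_gt0 _).
exists (1 - d).
  by rewrite ltrBlDr ltrDl d0 subr_ge0 (kernel_lb_le1 cT kc1 K1_norm (fun x y => d_le (x, y))).
move=> u w cu osc_u; have osc_K2u : osc_le (K2 u) w.
  by rewrite -[w]mul1r -[1]subr0; exact: (kernel_op_osc_le cT kc2 K2_norm (fun x y => expR_ge0 _)).
exact: (kernel_op_osc_le cT kc1 K1_norm (fun x y => d_le (x, y)))
  (kernel_op_continuous cT kc2 cu) osc_K2u.
Qed.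

End SchrodingerOperator.

Theorem mainTheorem17 (R : realType) (T : pseudoPMetricType R)
  (eps : R) (c : T -> T -> R)
  (mu nu : probability (borelType T) R) (f g : T -> R) :
  (* X is a compact metric space *)
  hausdorff_space T -> compact [set: T] ->
  (* standing assumptions on eps and c *)
  0 < eps ->
  continuous (fun p : T * T => c p.1 p.2) ->
  (forall x y, c x y = c y x) ->
  (forall x y, 0 <= c x y) ->
  pos_def_kernel (fun x y => expR (- c x y / eps)) ->
  universal_kernel (fun x y => expR (- c x y / eps)) ->
  (* (f, g) = (f_{mu,nu}, f_{nu,mu}) are the Schrodinger potentials *)
  continuous f -> continuous g ->
  f = Tsch eps c g nu -> g = Tsch eps c f mu ->
  Rintegral mu [set: borelType T] f = Rintegral nu [set: borelType T] g ->
  let A := fun phi : T -> R =>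
    (fun x => phi x - Kop eps c f g nu (Kop eps c g f mu phi) x) in
  (* A = Id - K_{mu,nu} K_{nu,mu} maps C(X) into C(X) *)
  (forall phi, continuous phi -> continuous (A phi)) /\
  (* A is linear on C(X) *)
  (forall (a : R) phi psi, continuous phi -> continuous psi ->
     A (fun x => a * phi x + psi x) = (fun x => a * A phi x + A psi x)) /\
  (* A is well defined on C(X)/R *)
  (forall phi psi, continuous phi -> continuous psi ->
     (exists l : R, phi = (fun x => psi x + l)) ->
     exists l' : R, A phi = (fun x => A psi x + l')) /\
  (* A is continuous for the quotient norm of C(X)/R *)
  (forall phi0, continuous phi0 -> forall e : R, 0 < e ->
     exists2 d : R, 0 < d & forall phi, continuous phi ->
       qnorm (fun x => phi x - phi0 x) < d ->
       qnorm (fun x => A phi x - A phi0 x) < e) /\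
  (* A is injective on C(X)/R *)
  (forall phi, continuous phi ->
     (exists l : R, A phi = (fun=> l)) -> exists l : R, phi = (fun=> l)) /\
  (* A is surjective on C(X)/R *)
  (forall psi, continuous psi ->
     exists2 phi, continuous phi & exists l : R, A phi = (fun x => psi x + l)).
Proof.
move=> _ cT eps0 cc c_sym _ _ _ cf cg f_eq g_eq _ A.
pose P u := Kop eps c f g nu (Kop eps c g f mu u).
have KKc : forall u, continuous u -> continuous (P u) := KK_continuous cT cc cf cg.
have KKl := KK_linear eps mu nu cT cc cf cg.
have KKcst := KK_cst cT eps0 cc c_sym cf cg f_eq g_eq.
have [th /andP[th0 th1] KKosc] := KK_osc_contraction cT eps0 cc c_sym cf cg f_eq g_eq.
split; first exact (IdP_continuous KKc).
split; first exact (IdP_linear KKl).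
split; first exact (IdP_quotient_wd KKl KKcst).
split; first exact (IdP_qnorm_continuous cT th1 KKc KKl KKosc).
split; first exact (IdP_inj cT th0 th1 KKosc).
exact (IdP_surj cT th0 th1 KKc KKl KKcst KKosc).
Qed.
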